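(* Let $G$ be a group with identity $e$ and let $A$ be a finite set with $|A|\ge 2$. Let $S\subseteq G$ be a finite subset with $e\in S$ and $|S|\ge 2$, and let $\mu:A^S\to A$ be a local map, generated by the pair $(\mathcal P,f)$. Then: (1) If $|\mathcal P|\neq |A|^{|S|}-|A|^{|S|-1}$, then $e\in\mathrm{mms}(\mu)$. (2) If $|\mathcal P|$ is not a multiple of $|A|$, then $\mathrm{mms}(\mu)=S$. (3) If $|S|\ge 3$, $f$ is well-behaved and $|\mathcal P|=|A|$, then $\mathrm{mms}(\mu)=S$ or $\mathrm{mms}(\mu)=S\setminus\{s\}$ for some $s\in S\setminus\{e\}$.
   Context: For a finite $S\subseteq G$, $A^S$ denotes the set of all functions $S\to A$ (patterns), and $A^G$ the set of all functions $G\to A$ (configurations). The shift action of $G$ on $A^G$ is $(g\cdot x)(h)=x(g^{-1}h)$. A local map $\mu:A^S\to A$ defines the cellular automaton $\tau:A^G\to A^G$, $\tau(x)(g)=\mu((g^{-1}\cdot x)|_S)$ for all $x\in A^G$, $g\in G$. A finite set $T\subseteq G$ is a memory set of $\tau$ if some local map $A^T\to A$ defines $\tau$. The minimal memory set $\mathrm{mms}(\mu)$ is the intersection of all memory sets of the cellular automaton defined by $\mu$. The pair $(\mathcal P,f)$ generates $\mu$ if $\mathcal P=\{z\in A^S:\mu(z)\neq z(e)\}$ and $f:\mathcal P\to A$ is the restriction of $\mu$ to $\mathcal P$. The function $f$ is well-behaved if for all $p,q\in\mathcal P$: $p(e)=q(e)$ if and only if $f(p)=f(q)$. *)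

From HB Require Import structures.
From mathcomp Require Import all_boot.
From mathcomp Require Import monoid.
From mathcomp Require Import finmap.

Set Implicit Arguments.
Unset Strict Implicit.
Unset Printing Implicit Defensive.

Local Open Scope fset_scope.
Local Open Scope group_scope.

Section CA.
Variables (G : groupType) (A : finType).

Definition config := G -> A.

Definition shift (g : G) (x : config) : config := fun h => x (g^-1 * h).

Definition restr (S : {fset G}) (x : config) : {ffun S -> A} :=
  [ffun s => x (fsval s)].

Definition ca (S : {fset G}) (mu : {ffun S -> A} -> A) : config -> config :=
  fun x g => mu (restr S (shift g^-1 x)).

Definition memory_set (S : {fset G}) (mu : {ffun S -> A} -> A) (T : {fset G}) : Prop :=
  exists nu : {ffun T -> A} -> A, ca nu = ca mu.

Definition mms (S : {fset G}) (mu : {ffun S -> A} -> A) (g : G) : Prop :=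
  forall T : {fset G}, memory_set mu T -> g \in T.

(* the set P of the generating pair (P, f): patterns z with mu z <> z(e) *)
Definition patterns (S : {fset G}) (He : 1 \in S) (mu : {ffun S -> A} -> A)
  : {set {ffun S -> A}} := [set z | mu z != z [` He]].

(* f := restriction of mu to P is well-behaved *)
Definition well_behaved (S : {fset G}) (He : 1 \in S) (mu : {ffun S -> A} -> A) : Prop :=
  forall p q, p \in patterns He mu -> q \in patterns He mu ->
    (p [` He] = q [` He] <-> mu p = mu q).

End CA.

(* A cell s of S lies in the minimal memory set exactly when mu depends on the
   value at s: if mu ignores s then S minus s is a memory set, and otherwise two
   configurations differing only at s are told apart by every memory set.
   Everything then follows by counting P.  If mu ignores a cell s other than e,
   P is invariant under changing the value at s, so |A| divides |P|, and |A|^2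
   divides it when there are two such cells.  If mu ignores e, then for each
   assignment of the other cells exactly one value at e is fixed by mu, so
   |P| = |A|^|S| - |A|^(|S|-1). *)

From Stdlib Require Import FunctionalExtensionality.
From HB Require Import structures.
From mathcomp Require Import all_boot.
From mathcomp Require Import monoid.
From mathcomp Require Import finmap.

Set Implicit Arguments.
Unset Strict Implicit.
Unset Printing Implicit Defensive.

Section FfunUpdate.
Variables (I A : finType).
Implicit Types (z : {ffun I -> A}) (X : {set {ffun I -> A}}) (mu : {ffun I -> A} -> A).

Definition fupd z (i : I) (a : A) : {ffun I -> A} := [ffun j => if j == i then a else z j].

Lemma fupdE z i a j : fupd z i a j = if j == i then a else z j.
Proof. by rewrite ffunE. Qed.

Lemma fupd_fupd z i a b : fupd (fupd z i a) i b = fupd z i b.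
Proof. by apply/ffunP => j; rewrite !fupdE; case: eqP. Qed.

Lemma fupd_id z i : fupd z i (z i) = z.
Proof. by apply/ffunP => j; rewrite fupdE; case: eqP => // ->. Qed.

Definition fupd_closed i X := forall z a, (fupd z i a \in X) = (z \in X).

Lemma card_fupd_closed i a X : fupd_closed i X -> #|X| = #|A| * #|[set z in X | z i == a]|.
Proof.
rewrite /fupd_closed => Xi; set Y := [set z in X | z i == a].
have -> : X = [set fupd p.2 i p.1 | p in setX [set: A] Y].
  apply/setP => z; apply/idP/imsetP => [zX | [[b w]] + ->].
    exists (z i, fupd z i a); last by rewrite /= fupd_fupd fupd_id.
    by rewrite !inE /= Xi zX fupdE !eqxx.
  by rewrite !inE /= Xi => /andP[].
rewrite card_in_imset ?cardsX ?cardsT // => -[b w] [c v].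
rewrite !inE /= => /andP[_ /eqP wa] /andP[_ /eqP va] E.
have bc : b = c by move/ffunP/(_ i): E; rewrite !fupdE eqxx.
congr pair => //; apply/ffunP => j; move/ffunP/(_ j): E.
by rewrite !fupdE bc; case: eqP => [-> _|]; rewrite ?wa ?va.
Qed.

Lemma fupd_closed_fiber i j a X :
  i != j -> fupd_closed j X -> fupd_closed j [set z in X | z i == a].
Proof. by rewrite /fupd_closed => ij Xj z b; rewrite !inE Xj fupdE (negbTE ij). Qed.

Lemma dvdn_card_fupd_closed i X : fupd_closed i X -> #|A| %| #|X|.
Proof.
move=> Xi; have [-> | [z _]] := set_0Vmem X; first by rewrite cards0 dvdn0.
by rewrite (card_fupd_closed (z i) Xi) dvdn_mulr.
Qed.

Lemma dvdn_card_fupd_closed2 i j X :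
  i != j -> fupd_closed i X -> fupd_closed j X -> #|A| ^ 2 %| #|X|.
Proof.
move=> ij Xi Xj; have [-> | [z _]] := set_0Vmem X; first by rewrite cards0 dvdn0.
rewrite (card_fupd_closed (z i) Xi) expnS expn1 dvdn_mul //.
exact: dvdn_card_fupd_closed (fupd_closed_fiber _ ij Xj).
Qed.

Lemma card_fiber i a : #|[set z : {ffun I -> A} | z i == a]| = #|A| ^ #|I|.-1.
Proof.
have /(card_fupd_closed a) : fupd_closed i [set: {ffun I -> A}] by move=> z b; rewrite !inE.
have I_gt0 : 0 < #|I| by apply/card_gt0P; exists i.
have A_gt0 : 0 < #|A| by apply/card_gt0P; exists a.
rewrite cardsT card_ffun -{1}(prednK I_gt0) expnS => /eqP; rewrite eqn_pmul2l //.
by move/eqP->; apply: eq_card => z; rewrite !inE.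
Qed.

Definition indep mu i := [forall z, forall a, mu (fupd z i a) == mu z].

Lemma indepP mu i : reflect (forall z a, mu (fupd z i a) = mu z) (indep mu i).
Proof.
apply: (iffP forallP) => [mui z a | mui z]; first exact/eqP/(forallP (mui z)).
by apply/forallP => a; rewrite mui.
Qed.

Lemma card_fixed_indep a mu e :
  indep mu e -> #|[set z | mu z == z e]| = #|[set z : {ffun I -> A} | z e == a]|.
Proof.
move/indepP => mue.
have -> : [set z : {ffun I -> A} | z e == a] = [set fupd z e a | z in [set z | mu z == z e]].
  apply/setP => w; rewrite inE; apply/eqP/imsetP => [we | [z _ ->]].
    exists (fupd w e (mu w)); first by rewrite inE mue fupdE !eqxx.
    by rewrite fupd_fupd -we fupd_id.
  by rewrite fupdE eqxx.
apply/esym/card_in_imset.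
move=> z w; rewrite !inE => /eqP ze /eqP we E; apply/ffunP => j.
have {}ze : z e = w e by rewrite -ze -we -(mue z a) -(mue w a) E.
by move/ffunP/(_ j): E; rewrite !fupdE; case: eqP => [-> |].
Qed.

Lemma card_moved_indep mu e : 0 < #|A| -> indep mu e ->
  #|[set z | mu z != z e]| = #|A| ^ #|I| - #|A| ^ #|I|.-1.
Proof.
case/card_gt0P => a _ mue; rewrite -card_ffun -(card_fiber e a) -(card_fixed_indep a mue).
rewrite cardsCs; congr (_ - _); apply: eq_card => z; by rewrite !inE negbK.
Qed.

Lemma fupd_closed_moved mu e i :
  i != e -> indep mu i -> fupd_closed i [set z | mu z != z e].
Proof. by move=> ie /indepP mui z a; rewrite !inE mui fupdE [e == i]eq_sym (negbTE ie). Qed.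

End FfunUpdate.

Local Open Scope fset_scope.

Section MemorySets.
Variables (G : groupType) (A : finType).

Definition extend (T : {fset G}) (w : {ffun T -> A}) (a : A) : config G A :=
  fun h => if insub h is Some t then w t else a.

Lemma extend_in (T : {fset G}) (w : {ffun T -> A}) a (t : T) : extend w a (fsval t) = w t.
Proof. by rewrite /extend valK. Qed.

Lemma extend_notin (T : {fset G}) (w : {ffun T -> A}) a h : h \notin T -> extend w a h = a.
Proof. by move=> hT; rewrite /extend insubN. Qed.

Lemma restr_extend (T : {fset G}) (w : {ffun T -> A}) a : restr T (extend w a) = w.
Proof. by apply/ffunP => t; rewrite ffunE extend_in. Qed.

Lemma restr_shift1 (T : {fset G}) (x : config G A) : restr T (shift 1%g^-1 x) = restr T x.
Proof. by apply/ffunP => t; rewrite !ffunE /shift !invg1 mul1g. Qed.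

Variables (S : {fset G}) (mu : {ffun S -> A} -> A).

Lemma memory_set_restr T x y :
  memory_set mu T -> restr T x = restr T y -> mu (restr S x) = mu (restr S y).
Proof.
case=> nu numu; have E z : nu (restr T z) = mu (restr S z).
  by have := congr1 (fun F => F z 1%g) numu; rewrite /ca /= !restr_shift1.
by rewrite -!E => ->.
Qed.

Lemma mms_of_dependent (s : S) : ~~ indep mu s -> mms mu (fsval s).
Proof.
move=> dep T memT; apply: contraNT dep => sT; apply/indepP => z a.
rewrite -[fupd z s a](restr_extend _ (z s)) -[z in RHS](restr_extend _ (z s)).
apply: memory_set_restr memT _; apply/ffunP => t; rewrite !ffunE.
have [tS | tS] := boolP (fsval t \in S); last by rewrite !extend_notin.
rewrite -[fsval t]/(fsval [` tS]) !extend_in fupdE; case: eqP => // ts.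
by rewrite -ts (fsvalP t) in sT.
Qed.

Lemma memory_setD1 (s : S) : 0 < #|A| -> indep mu s -> memory_set mu (S `\ fsval s).
Proof.
case/card_gt0P => a _ /indepP mus; exists (fun w => mu (restr S (extend w a))).
apply: functional_extensionality => x; apply: functional_extensionality => g.
rewrite /ca -[RHS](mus _ a); congr mu; apply/ffunP => t; rewrite !ffunE.
case: eqP => [-> | ts]; first by rewrite extend_notin // in_fsetD1 eqxx.
have tD : fsval t \in S `\ fsval s.
  by rewrite in_fsetD1 fsvalP andbT; apply/eqP => /val_inj.
by rewrite -[fsval t]/(fsval [` tD]) extend_in ffunE.
Qed.

Lemma mms_sub g : mms mu g -> g \in S.
Proof. by apply; exists mu. Qed.

Lemma mms_fsvalE (s : S) : 0 < #|A| -> mms mu (fsval s) <-> ~~ indep mu s.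
Proof.
move=> A_gt0; split=> [mmss | ]; last exact: mms_of_dependent.
by apply/negP => /(memory_setD1 A_gt0) /mmss; rewrite in_fsetD1 eqxx.
Qed.

Lemma mms_eq_support : (forall s : S, ~~ indep mu s) -> forall g, mms mu g <-> g \in S.
Proof.
move=> dep g; split=> [|gS]; first exact: mms_sub.
exact: mms_of_dependent (dep [` gS]).
Qed.

Lemma mms_eq_fsetD1 (s0 : S) : 0 < #|A| -> indep mu s0 ->
  (forall s, s != s0 -> ~~ indep mu s) -> forall g, mms mu g <-> g \in S `\ fsval s0.
Proof.
move=> A_gt0 mus0 dep g; split=> [mmsg | ]; first exact: mmsg _ (memory_setD1 A_gt0 mus0).
rewrite in_fsetD1 => /andP[gs0 gS]; apply: (mms_of_dependent (dep [` gS] _)).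
by apply: contra gs0 => /eqP <-.
Qed.

End MemorySets.

Lemma ltn_expB n k : 1 < n -> 2 < k -> n < n ^ k - n ^ (k - 1).
Proof.
move=> n_gt1; case: k => // k k_gt1.
rewrite subSS subn0 expnS -{2}(mul1n (n ^ k)) -mulnBl.
apply: (@leq_trans (n ^ k)); first by rewrite -{1}(expn1 n) ltn_exp2l.
by rewrite leq_pmull // subn_gt0.
Qed.

Section Patterns.
Variables (G : groupType) (A : finType) (S : {fset G}) (He : 1%g \in S).
Variable mu : {ffun S -> A} -> A.

Lemma card_patterns_indep1 : 0 < #|A| ->
  indep mu [` He] -> #|patterns He mu| = #|A| ^ #|` S| - #|A| ^ (#|` S| - 1).
Proof. by move=> A_gt0 mu1; rewrite card_moved_indep // cardfE subn1. Qed.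

Lemma mms1_of_card_patterns : 0 < #|A| ->
  #|patterns He mu| <> #|A| ^ #|` S| - #|A| ^ (#|` S| - 1) -> mms mu 1%g.
Proof.
move=> A_gt0 cardP; apply: (mms_fsvalE mu [` He] A_gt0).2; apply/negP.
by move/(card_patterns_indep1 A_gt0).
Qed.

Lemma mms_eq_support_of_ndvdn : 0 < #|A| -> 1 < #|` S| ->
  ~~ (#|A| %| #|patterns He mu|) -> forall g, mms mu g <-> g \in S.
Proof.
move=> A_gt0 S_gt1 ndvd; apply: mms_eq_support => s; apply: contra ndvd => mus.
move: mus; have [-> mu1 | s1 mus] := eqVneq s [` He].
  by rewrite card_patterns_indep1 // dvdn_sub ?dvdn_exp // ?subn_gt0 // ltnW.
exact: dvdn_card_fupd_closed (fupd_closed_moved s1 mus).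
Qed.

Lemma mms_of_card_patterns_eq : 1 < #|A| -> 2 < #|` S| -> #|patterns He mu| = #|A| ->
  (forall g, mms mu g <-> g \in S) \/
  (exists2 s, s \in S & s != 1%g /\ (forall g, mms mu g <-> g \in S `\ s)).
Proof.
move=> A_gt1 S_gt2 cardP; have A_gt0 := ltnW A_gt1.
have dep1 : ~~ indep mu [` He].
  apply/negP => /(card_patterns_indep1 A_gt0); rewrite cardP => /eqP.
  by rewrite ltn_eqF // ltn_expB.
case: (pickP (indep mu)) => [s0 mus0 | alldep]; last first.
  by left; apply: mms_eq_support => s; rewrite alldep.
have s01 : s0 != [` He] by apply: contraNneq dep1 => <-.
right; exists (fsval s0); first exact: fsvalP.
split; first by apply: contra s01 => /eqP E; apply/eqP/val_inj.
apply: mms_eq_fsetD1 => // s ss0; apply/negP => mus.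
have s1 : s != [` He] by apply: contraNneq dep1 => <-.
have := dvdn_card_fupd_closed2 ss0 (fupd_closed_moved s1 mus) (fupd_closed_moved s01 mus0).
by rewrite cardP => /(dvdn_leq A_gt0); rewrite expnS expn1 leqNgt ltn_Pmull.
Qed.

End Patterns.

Unset Implicit Arguments.
Local Open Scope group_scope.

Theorem theorem1 (G : groupType) (A : finType) (S : {fset G}) (He : 1 \in S)
    (mu : {ffun S -> A} -> A) :
  (1 < #|A|)%N -> (1 < #|` S|)%N ->
  [/\ (#|patterns He mu| <> #|A| ^ #|` S| - #|A| ^ (#|` S| - 1))%N -> mms mu 1,
      ~~ (#|A| %| #|patterns He mu|)%N -> (forall g, mms mu g <-> g \in S)
    & (2 < #|` S|)%N -> well_behaved He mu -> #|patterns He mu| = #|A| ->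
      (forall g, mms mu g <-> g \in S) \/
      (exists2 s, s \in S & s != 1 /\ (forall g, mms mu g <-> g \in S `\ s))].
Proof.
move=> A_gt1 S_gt1; have A_gt0 := ltnW A_gt1.
split=> [|| S_gt2 _]; first exact: mms1_of_card_patterns.
  exact: mms_eq_support_of_ndvdn.
exact: mms_of_card_patterns_eq.
Qed.
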